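(* Let $n,m,N$ be positive integers, $p_1,\ldots,p_N,q_1,\ldots,q_N,g_1,\ldots,g_m\in\mathbb{R}[\mathbf{x}]$ with $\mathbf{x}=(x_1,\ldots,x_n)$, $\mathbf{K}=\{\mathbf{x}\in\mathbb{R}^n\mid g_j(\mathbf{x})\ge0,\ j\in[m]\}$, and assume $\mathbf{K}$ is compact and $q_i>0$ on $\mathbf{K}$ for all $i\in[N]$. Let $\rho=\inf_{\mathbf{x}\in\mathbf{K}}\sum_{i=1}^Np_i(\mathbf{x})/q_i(\mathbf{x})$. With $\mathcal{A}_i$ as in the context, let \[ \rho^{\mathrm{s}}=\sup\Big\{c\ \Big|\ c\in\mathbb{R},\ h_i\in\mathbb{R}[\overline{\mathcal{A}_i}]\ (i=2,\ldots,N),\ \frac{p_1(\mathbf{x})}{q_1(\mathbf{x})}+\sum_{i=2}^Nh_i(\mathbf{x})\ge c\ \text{and}\ \frac{p_i(\mathbf{x})}{q_i(\mathbf{x})}\ge h_i(\mathbf{x})\ (i=2,\ldots,N)\ \text{for all }\mathbf{x}\in\mathbf{K}\Big\}. \] Then $\rho^{\mathrm{s}}=\rho$.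
   Context: $\operatorname{supp}(f)$ is the set of exponents of monomials with nonzero coefficient in $f$. For $i\in\{2,\ldots,N\}$, $\mathcal{A}_i=\operatorname{supp}(p_i)\cup\operatorname{supp}(q_i)\cup\bigcup_{j=1}^m\operatorname{supp}(g_j)$. For finite $\mathcal{A}\subseteq\mathbb{N}^n$, $\mathcal{R}(\mathcal{A})=\{\mathbf{r}\in\{0,1\}^n\mid \mathbf{r}^\intercal\boldsymbol{\alpha}\equiv0\ (\mathrm{mod}\ 2)\ \forall\boldsymbol{\alpha}\in\mathcal{A}\}$ and $\overline{\mathcal{A}}=\{\boldsymbol{\alpha}\in\mathbb{N}^n\mid\mathbf{r}^\intercal\boldsymbol{\alpha}\equiv0\ (\mathrm{mod}\ 2)\ \forall\mathbf{r}\in\mathcal{R}(\mathcal{A})\}$. $\mathbb{R}[\overline{\mathcal{A}}]$ is the set of polynomials whose support is contained in $\overline{\mathcal{A}}$. *)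

From HB Require Import structures.
From mathcomp Require Import all_boot all_order all_algebra.
From mathcomp Require Import mpoly.
Set Implicit Arguments. Unset Strict Implicit. Unset Printing Implicit Defensive.
Import Order.TTheory GRing.Theory Num.Theory.
Local Open Scope ring_scope.

Notation rpoly R n := (mpoly n R).
Notation expo n := (multinom n).

Definition supp (R : realDomainType) (n : nat) (f : rpoly R n) : seq (expo n) :=
  msupp f.

Definition ev (R : realDomainType) (n : nat) (f : rpoly R n) (x : 'rV[R]_n) : R :=
  f.@[fun i => x ord0 i].

Definition even_pair (n : nat) (r : 'I_n -> bool) (a : expo n) : bool :=
  ~~ odd (\sum_(i < n) (r i : nat) * a i)%N.

Definition in_RA (n : nat) (A : seq (expo n)) (r : 'I_n -> bool) : Prop :=
  forall a : expo n, a \in A -> even_pair r a.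

Definition in_Abar (n : nat) (A : seq (expo n)) (a : expo n) : Prop :=
  forall r : 'I_n -> bool, in_RA A r -> even_pair r a.

Definition in_RAbar (R : realDomainType) (n : nat) (A : seq (expo n)) (f : rpoly R n)
  : Prop :=
  forall a : expo n, a \in supp f -> in_Abar A a.

Definition Aset (R : realDomainType) (n m : nat) (pi qi : rpoly R n)
  (g : 'I_m -> rpoly R n) : seq (expo n) :=
  supp pi ++ supp qi ++ flatten [seq supp (g j) | j <- enum 'I_m].

Definition Kset (R : realDomainType) (n m : nat) (g : 'I_m -> rpoly R n)
  : 'rV[R]_n -> Prop :=
  fun x => forall j, 0 <= ev (g j) x.

(* For i >= 2 the ratio p_i/q_i can be approximated uniformly on K, from below
   and within any e > 0, by a polynomial h_i in R[Abar_i].  Indeed, if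
   0 < a <= q <= b on K, the truncated geometric series
   (p/b) * sum_{k<M} (1 - q/b)^k differs from p/q by p (1 - q/b)^M / q, which
   is at most |p| (1 - a/b)^M / a; shifting by a small constant puts it below
   p/q.  Its support lies in the additive monoid generated by supp p_i and
   supp q_i, and Abar_i is such a monoid containing A_i.  With these h_i every
   c < rho is feasible for rho^s, and rho^s <= rho holds because h_i <= p_i/q_i. *)

From HB Require Import structures.
From mathcomp Require Import all_boot all_order all_algebra.
From mathcomp Require Import all_classical all_reals all_analysis.
From mathcomp Require mpoly.
From mathcomp Require Import ring lra.
Import Order.TTheory GRing.Theory Num.Theory.
Import numFieldTopology.Exports numFieldNormedType.Exports.
Local Open Scope classical_set_scope.
Local Open Scope ring_scope.
Import (canonicals, coercions) mpoly.
Set Implicit Arguments. Unset Strict Implicit. Unset Printing Implicit Defensive.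

Section Abar.
Variables (n : nat) (A : seq (expo n)).

Lemma in_Abar0 : in_Abar A (@mpoly.mnm0 n).
Proof. by move=> r _; rewrite /even_pair big1 // => i _; rewrite mpoly.mnm0E muln0. Qed.

Lemma in_AbarD (a b : expo n) :
  in_Abar A a -> in_Abar A b -> in_Abar A (@mpoly.mnm_add n a b).
Proof.
move=> ha hb r hr; rewrite /even_pair.
under eq_bigr do rewrite mpoly.mnmDE mulnDr.
by rewrite big_split oddD (negbTE (ha r hr)) (negbTE (hb r hr)).
Qed.

Lemma in_Abar_mem (a : expo n) : a \in A -> in_Abar A a.
Proof. by move=> aA r; apply. Qed.

End Abar.

(* [in_RAbar A] is convertible to [msupp_in (in_Abar A)]. *)
Definition msupp_in (R : nzRingType) (n : nat) (S : expo n -> Prop) (f : rpoly R n) :=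
  forall a, a \in mpoly.msupp f -> S a.

Section SupportedInMonoid.
Variables (R : nzRingType) (n : nat) (S : expo n -> Prop).
Hypotheses (S0 : S (@mpoly.mnm0 n))
  (SD : forall a b, S a -> S b -> S (@mpoly.mnm_add n a b)).
Implicit Types f h : rpoly R n.

Lemma msupp_in0 : msupp_in S (0 : rpoly R n).
Proof. by move=> a; rewrite -mpoly.mpolyC0 mpoly.msupp0. Qed.

Lemma msupp_in1 : msupp_in S (1 : rpoly R n).
Proof. by move=> a; rewrite mpoly.msupp1 inE => /eqP ->. Qed.

Lemma msupp_inZ c f : msupp_in S f -> msupp_in S (c *: f).
Proof. by move=> hf a /mpoly.msuppZ_le /hf. Qed.

Lemma msupp_inD f h : msupp_in S f -> msupp_in S h -> msupp_in S (f + h).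
Proof. by move=> hf hh a /mpoly.msuppD_le; rewrite mem_cat => /orP[/hf|/hh]. Qed.

Lemma msupp_inB f h : msupp_in S f -> msupp_in S h -> msupp_in S (f - h).
Proof. by move=> hf hh a /mpoly.msuppB_le; rewrite mem_cat => /orP[/hf|/hh]. Qed.

Lemma msupp_inM f h : msupp_in S f -> msupp_in S h -> msupp_in S (f * h).
Proof.
move=> hf hh a /mpoly.msuppM_le /allpairsP[[a1 a2] /= [/hf h1 /hh h2 ->]].
exact: SD.
Qed.

Lemma msupp_inX f k : msupp_in S f -> msupp_in S (f ^+ k).
Proof.
move=> hf; elim: k => [|k ih]; first exact: msupp_in1.
by rewrite exprS; apply: msupp_inM.
Qed.

Lemma msupp_in_sum (I : Type) (r : seq I) (F : I -> rpoly R n) :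
  (forall i, msupp_in S (F i)) -> msupp_in S (\sum_(i <- r) F i).
Proof. by move=> hF; apply: big_ind => //; [exact: msupp_in0|exact: msupp_inD]. Qed.

End SupportedInMonoid.

Lemma ev_continuous (R : realType) (n : nat) (f : rpoly R n) : continuous (ev f).
Proof.
pose cont (F : 'rV[R]_n -> R) := continuous F.
have -> : ev f = \sum_(a <- mpoly.msupp f)
    ((fun=> mpoly.mcoeff a f) \* \prod_(i < n) (fun x : 'rV[R]_n => x ord0 i ^+ a i)).
  apply: funext => x; rewrite /ev mpoly.mevalE fct_sumE.
  by apply: eq_bigr => a _; rewrite /= fct_prodE.
apply: (big_ind cont) => [|F G cF cG|a _].
- exact: cst_continuous.
- by move=> x; apply: continuousD (cF x) (cG x).
- move=> x; apply: continuousM; first exact: cst_continuous.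
  move: x; apply: (big_ind cont) => [|F G cF cG|i _].
  + exact: cst_continuous.
  + by move=> x; apply: continuousM (cF x) (cG x).
  + move=> x; exact: (continuous_comp (@coord_continuous R 1 n ord0 i x)
                                        (@exprn_continuous R (a i) _)).
Qed.

Section CompactBounds.
Variables (R : realType) (T : topologicalType) (K : set T) (f : T -> R).
Hypotheses (hK : compact K) (cf : continuous f).

Lemma compact_norm_bounded : exists C : R, forall x, K x -> `|f x| <= C.
Proof.
have [[x0 Kx0]|K0] := pselect (K !=set0); last first.
  by exists 0 => x Kx; exfalso; apply: K0; exists x.
have cnf : continuous (Num.norm \o f).
  by move=> x; apply: continuous_comp; [exact: cf|exact: norm_continuous].
have [c _ hc] := compact_EVT_max (ex_intro _ x0 Kx0) hK (continuous_subspaceT cnf).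
by exists `|f c| => x Kx; apply: hc; exact/mem_set.
Qed.

Lemma compact_pos_lbound : (forall x, K x -> 0 < f x) ->
  exists2 a : R, 0 < a & forall x, K x -> a <= f x.
Proof.
move=> fK0; have [[x0 Kx0]|K0] := pselect (K !=set0); last first.
  by exists 1 => // x Kx; exfalso; apply: K0; exists x.
have [c /set_mem Kc hc] :=
  compact_EVT_min (ex_intro _ x0 Kx0) hK (continuous_subspaceT cf).
by exists (f c) => [|x Kx]; [exact: fK0|apply: hc; exact/mem_set].
Qed.

End CompactBounds.

Lemma exists_expr_le (R : realType) (t e : R) : 0 <= t -> t < 1 -> 0 < e ->
  exists M : nat, t ^+ M <= e.
Proof.
move=> t0 t1 e0; have tn1 : `|t| < 1 by rewrite ger0_norm.
have [M _ hM] := cvgr0_norm_le _ (cvg_expr tn1) _ e0.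
by exists M; apply: le_trans (hM M (leqnn M)); exact: ler_norm.
Qed.

Lemma div_sub_geometric_sum (R : fieldType) (P Q b : R) (M : nat) :
  Q != 0 -> b != 0 ->
  P / Q - P * (\sum_(k < M) (1 - Q / b) ^+ k) / b = P * (1 - Q / b) ^+ M / Q.
Proof.
move=> Q0 b0; have := subrX1 (1 - Q / b) M.
set S := \sum_(k < M) _ => tM.
have -> : (1 - Q / b) ^+ M = 1 - Q / b * S by rewrite -[LHS](subrK 1) tM; ring.
by field; apply/andP.
Qed.

Lemma geometric_ratio_tail_le (R : realType) (T : Type) (K : set T)
    (P Q : T -> R) (C a b e : R) :
  0 < a -> a <= b -> 0 < e ->
  (forall x, K x -> `|P x| <= C) -> (forall x, K x -> a <= Q x <= b) ->
  exists M : nat, forall x, K x -> `|P x * (1 - Q x / b) ^+ M / Q x| <= e.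
Proof.
move=> a0 ab e0 hP hQ; have b0 : 0 < b := lt_le_trans a0 ab.
have C1 : 0 < `|C| + 1 by rewrite ltr_pwDr.
have th0 : 0 <= 1 - a / b by rewrite subr_ge0 ler_pdivrMr // mul1r.
have [M hM] : exists M : nat, (1 - a / b) ^+ M <= e * a / (`|C| + 1).
  apply: exists_expr_le => //; last by rewrite !divr_gt0 ?mulr_gt0.
  by rewrite ltrBlDr ltrDl divr_gt0.
exists M => x Kx; have /andP[aQ Qb] := hQ x Kx; have Q0 : 0 < Q x := lt_le_trans a0 aQ.
have t0 : 0 <= 1 - Q x / b by rewrite subr_ge0 ler_pdivrMr // mul1r.
have tM : (1 - Q x / b) ^+ M <= e * a / (`|C| + 1).
  apply: le_trans hM; apply: lerXn2r; rewrite ?nnegrE //.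
  by rewrite lerD2l lerN2 ler_pM2r ?invr_gt0.
rewrite !normrM normfV (ger0_norm (exprn_ge0 M t0)) (gtr0_norm Q0) ler_pdivrMr //.
apply: le_trans (_ : `|C| * (e * a / (`|C| + 1)) <= _).
  by apply: ler_pM; rewrite ?exprn_ge0 //; apply: le_trans (hP x Kx) (ler_norm C).
apply: le_trans (_ : e * a <= _); last by rewrite ler_pM2l.
rewrite mulrCA ler_piMr ?mulr_ge0 ?(ltW e0) ?(ltW a0) //.
by rewrite ler_pdivrMr // mul1r lerDl.
Qed.

Lemma in_RAbar_supp (R : realDomainType) (n : nat) (A : seq (expo n)) (f : rpoly R n) :
  {subset supp f <= A} -> in_RAbar A f.
Proof. by move=> fA a /fA; exact: in_Abar_mem. Qed.

Lemma mpoly_ratio_approx_below (R : realType) (n : nat) (K : set 'rV[R]_n)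
    (A : seq (expo n)) (p q : rpoly R n) :
  compact K -> (forall x, K x -> 0 < ev q x) ->
  {subset supp p <= A} -> {subset supp q <= A} ->
  forall e, 0 < e -> exists2 h : rpoly R n, in_RAbar A h &
    forall x, K x -> ev p x / ev q x - e <= ev h x <= ev p x / ev q x.
Proof.
move=> hK q0 pA qA e e0.
have [a a0 qa] := compact_pos_lbound hK (ev_continuous (f := q)) q0.
have [Cq qCq] := compact_norm_bounded hK (ev_continuous (f := q)).
have [Cp pCp] := compact_norm_bounded hK (ev_continuous (f := p)).
pose b := Num.max a Cq.
have ab : a <= b by rewrite le_max lexx.
have qab x : K x -> a <= ev q x <= b.
  by move=> Kx; rewrite qa //= le_max (le_trans (ler_norm _) (qCq x Kx)) orbT.
have e20 : 0 < e / 2 by rewrite divr_gt0.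
have [M hM] := geometric_ratio_tail_le a0 ab e20 pCp qab.
pose S := \sum_(k < M) (1 - b^-1 *: q) ^+ k.
exists (b^-1 *: (p * S) - (e / 2) *: 1).
  have S0 := @in_Abar0 n A; have SD := @in_AbarD n A.
  apply: msupp_inB; apply: msupp_inZ; last exact: msupp_in1 S0.
  apply: (msupp_inM SD); first exact: in_RAbar_supp.
  apply: msupp_in_sum => k; apply: (msupp_inX S0 SD); apply: msupp_inB.
    exact: msupp_in1 S0.
  by apply: msupp_inZ; apply: in_RAbar_supp.
move=> x Kx; have /andP[aQ _] := qab x Kx.
have Q0 : ev q x != 0 by rewrite gt_eqF // (lt_le_trans a0 aQ).
have b0 : b != 0 by rewrite gt_eqF // (lt_le_trans a0 ab).
have -> : ev (b^-1 *: (p * S) - (e / 2) *: 1) x =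
    ev p x * (\sum_(k < M) (1 - ev q x / b) ^+ k) / b - e / 2.
  rewrite /ev rmorphB /= !mpoly.mevalZ rmorphM rmorph_sum rmorph1 /= mulr1.
  rewrite mulrC; congr (_ * _ * _ - _); apply: eq_bigr => k _.
  by rewrite rmorphXn rmorphB /= mpoly.mevalZ rmorph1 mulrC.
have := div_sub_geometric_sum (ev p x) M Q0 b0.
have := hM x Kx; rewrite ler_norml => /andP[lo hi] hdiff.
apply/andP; split; lra.
Qed.

Section SparseLowerBound.
Variables (R : realType) (T U : Type) (K : set T) (N : nat) (i1 : 'I_N).
Variables (F : 'I_N -> T -> R) (Adm : 'I_N -> U -> Prop) (E : U -> T -> R).

(* The constraint set of rho^s, the index [i1] playing the role of 1. *)
Definition sparse_lower_bound (c : R) := exists h : 'I_N -> U,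
  (forall i, i != i1 -> Adm i (h i)) /\
  (forall x, K x -> c <= F i1 x + \sum_(i < N | i != i1) E (h i) x /\
     (forall i, i != i1 -> E (h i) x <= F i x)).

Lemma sparse_lower_bound_le c x : sparse_lower_bound c -> K x -> c <= \sum_i F i x.
Proof.
case=> h [_ hh] Kx; have [cle hF] := hh x Kx.
rewrite (bigD1 i1) //=; apply: le_trans cle _.
by rewrite lerD2l; apply: ler_sum => i; exact: hF.
Qed.

Hypothesis F_approx : forall i e, 0 < e ->
  exists2 u, Adm i u & forall x, K x -> F i x - e <= E u x <= F i x.

Lemma sparse_lower_bound_sub c e :
  (forall x, K x -> c <= \sum_i F i x) -> 0 < e -> sparse_lower_bound (c - e).
Proof.
move=> hc e0; have N0 : (0 : R) < N%:R by rewrite ltr0n (leq_ltn_trans (leq0n i1) (ltn_ord i1)).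
have eN0 : 0 < e / N%:R by rewrite divr_gt0.
have /boolp.choice[h hh] : forall i, exists u, Adm i u /\
    forall x, K x -> F i x - e / N%:R <= E u x <= F i x.
  by move=> i; have [u ? ?] := F_approx i eN0; exists u.
exists h; split=> [i _|x Kx]; first exact: (hh i).1.
split=> [|i _]; last by have /andP[] := (hh i).2 x Kx.
have termE i : F i x - E (h i) x <= e / N%:R.
  by have /andP[+ _] := (hh i).2 x Kx; move=> ?; lra.
have sum_le : \sum_(i < N | i != i1) (F i x - E (h i) x) <=
    \sum_(i < N | i != i1) e / N%:R by apply: ler_sum => i _; exact: termE.
have eE : \sum_(i < N) e / N%:R = e.
  by rewrite sumr_const card_ord -[LHS]mulr_natr divfK ?gt_eqF.
rewrite (bigD1 i1) //= in eE.
have := hc x Kx; rewrite (bigD1 i1) //=.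
move: sum_le eE; rewrite sumrB; lra.
Qed.

Lemma ereal_sup_sparse_lower_bound :
  ereal_sup [set c%:E | c in sparse_lower_bound] =
  ereal_inf [set (\sum_i F i x)%:E | x in K].
Proof.
apply/le_anti/andP; split.
  apply: ge_ereal_sup => _ [c hc <-]; apply: le_ereal_inf_tmp => _ [x Kx <-].
  by rewrite lee_fin; exact: sparse_lower_bound_le hc Kx.
have infK x :
    K x -> (ereal_inf [set (\sum_i F i y)%:E | y in K] <= (\sum_i F i x)%:E)%E.
  by move=> Kx; apply: ereal_inf_lbound; exists x.
set rho := ereal_inf _ in infK *; case: rho infK => [r| |] infK; last exact: leNye.
- apply/lee_subgt0Pr => e e0; apply: ereal_sup_ubound; exists (r - e) => //.
  by apply: sparse_lower_bound_sub e0 => x /infK; rewrite lee_fin.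
- rewrite leye_eq; apply/eqP/eq_infty => r; apply: ereal_sup_ubound.
  exists r => //; rewrite -[r](addrK 1); apply: sparse_lower_bound_sub => // x /infK.
  by rewrite leye_eq.
Qed.

End SparseLowerBound.

Theorem theorem4p3 (R : realType) (n m N : nat)
    (hn : (0 < n)%N) (hm : (0 < m)%N) (hN : (0 < N)%N)
    (p q : 'I_N -> rpoly R n) (g : 'I_m -> rpoly R n)
    (hK : compact (Kset g : set 'rV[R]_n))
    (hq : forall (i : 'I_N) (x : 'rV[R]_n), Kset g x -> 0 < ev (q i) x) :
  let i1 : 'I_N := Ordinal hN in
  let rho := ereal_inf
    [set (\sum_(i < N) ev (p i) x / ev (q i) x)%:E | x in (Kset g : set 'rV[R]_n)] in
  let rho_s := ereal_sup
    [set c%:E | c in [set c : R | exists h : 'I_N -> rpoly R n,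
        (forall i : 'I_N, i != i1 -> in_RAbar (Aset (p i) (q i) g) (h i)) /\
        (forall x : 'rV[R]_n, Kset g x ->
           c <= ev (p i1) x / ev (q i1) x + \sum_(i < N | i != i1) ev (h i) x /\
           (forall i : 'I_N, i != i1 -> ev (h i) x <= ev (p i) x / ev (q i) x))]] in
  rho_s = rho.
Proof.
move=> i1 rho rho_s; rewrite /rho_s /rho.
apply: (@ereal_sup_sparse_lower_bound R _ (rpoly R n) (Kset g) N i1
  (fun i x => ev (p i) x / ev (q i) x) (fun i => in_RAbar (Aset (p i) (q i) g)) (@ev R n)).
move=> i e e0; apply: mpoly_ratio_approx_below hK (hq i) _ _ e e0 => a ha.
  by rewrite /Aset mem_cat ha.
by rewrite /Aset !mem_cat ha orbT.
Qed.
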